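(* Let $R \neq \epsilon$ be a homogeneous regular expression. Then there exist $\ell \leq \mathrm{rpn}(R)$ log-product expressions $B_1, \dots, B_{\ell}$ such that $R \equiv B_1 + \dots + B_{\ell}$.
   Context: Regular expressions (without star, without $\emptyset$) are built from $\epsilon$ and letters by union and concatenation; $\mathrm{rpn}(R)$ is the number of nodes of the syntax tree of $R$; $R\equiv R'$ means they describe the same language. A homogeneous expression describes a language all of whose words have the same length, its degree $\deg R$. A homogeneous expression $B$ is log-product if it is a letter, or there are homogeneous expressions $B_1,B_2$ with $B_1$ log-product, $\deg B_1\ge\deg B_2$ and $B=B_1B_2$ or $B=B_2B_1$. *)

From mathcomp Require Import all_boot.
From Stdlib Require List.

Set Implicit Arguments.
Unset Strict Implicit.
Unset Printing Implicit Defensive.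

Inductive re (A : Type) : Type :=
  | Eps : re A
  | Letter : A -> re A
  | Plus : re A -> re A -> re A
  | Cat : re A -> re A -> re A.

Arguments Eps {A}.

Fixpoint lang (A : Type) (r : re A) (w : seq A) : Prop :=
  match r with
  | Eps => w = [::]
  | Letter a => w = [:: a]
  | Plus r1 r2 => lang r1 w \/ lang r2 w
  | Cat r1 r2 => exists u v, w = u ++ v /\ lang r1 u /\ lang r2 v
  end.

Definition re_equiv (A : Type) (r s : re A) : Prop :=
  forall w, lang r w <-> lang s w.

Fixpoint rpn (A : Type) (r : re A) : nat :=
  match r with
  | Eps => 1
  | Letter _ => 1
  | Plus r1 r2 => (rpn r1 + rpn r2).+1
  | Cat r1 r2 => (rpn r1 + rpn r2).+1
  end.

Definition has_deg (A : Type) (r : re A) (n : nat) : Prop :=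
  forall w, lang r w -> size w = n.

Definition homogeneous (A : Type) (r : re A) : Prop :=
  exists n, has_deg r n.

Inductive log_product (A : Type) : re A -> Prop :=
  | LP_letter : forall a, log_product (Letter a)
  | LP_catl : forall b1 b2 n1 n2, log_product b1 -> has_deg b1 n1 ->
      has_deg b2 n2 -> n2 <= n1 -> log_product (Cat b1 b2)
  | LP_catr : forall b1 b2 n1 n2, log_product b1 -> has_deg b1 n1 ->
      has_deg b2 n2 -> n2 <= n1 -> log_product (Cat b2 b1).

Fixpoint re_sum (A : Type) (b : re A) (bs : seq (re A)) : re A :=
  match bs with
  | [::] => b
  | c :: cs => Plus b (re_sum c cs)
  end.

From mathcomp Require Import all_boot zify.
From Stdlib Require List.

Set Implicit Arguments.
Unset Strict Implicit.
Unset Printing Implicit Defensive.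

(* A union inherits the degree of the whole
   expression, so the decompositions of its two sides are concatenated.  For a
   concatenation [R1 R2] of degrees [d1 + d2], a factor of degree 0 denotes
   {epsilon} and can be dropped; otherwise, if say [d2 <= d1], every
   log-product summand [B] of [R1] gives the log-product expression [B R2], so
   the decomposition of [R1] is reused with [R2] appended to each summand. *)

Section LogProductDecomposition.
Variable A : Type.
Implicit Types (r : re A) (l : seq (re A)) (w : seq A).

Lemma lang_inhabited r : exists w, lang r w.
Proof.
elim: r => [|a|r1 [u1 L1] r2 [u2 L2]|r1 [u1 L1] r2 [u2 L2]] /=.
- by exists [::].
- by exists [:: a].
- by exists u1; left.
- by exists (u1 ++ u2), u1, u2.
Qed.

Lemma has_deg_Plus r1 r2 d :
  has_deg (Plus r1 r2) d -> has_deg r1 d /\ has_deg r2 d.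
Proof. by move=> Hd; split=> w Hw; apply: Hd; [left | right]. Qed.

Lemma has_deg_Cat r1 r2 d : has_deg (Cat r1 r2) d ->
  exists d1 d2, [/\ has_deg r1 d1, has_deg r2 d2 & d1 + d2 = d].
Proof.
move=> Hd; have [u1 L1] := lang_inhabited r1; have [u2 L2] := lang_inhabited r2.
have Hu : size (u1 ++ u2) = d by apply: Hd; exists u1, u2.
exists (size u1), (size u2); split; last by rewrite -size_cat.
- move=> u Hu'; have : size (u ++ u2) = d by apply: Hd; exists u, u2.
  by rewrite -Hu !size_cat => /addIn.
- move=> u Hu'; have : size (u1 ++ u) = d by apply: Hd; exists u1, u.
  by rewrite -Hu !size_cat => /addnI.
Qed.

Lemma has_deg0_equiv_Eps r : has_deg r 0 -> re_equiv r Eps.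
Proof.
move=> H0 w /=; split; first by move/H0/size0nil.
by have [u Hu] := lang_inhabited r; move: (H0 u Hu) => /size0nil <- ->.
Qed.

Lemma re_equiv_Cat_Eps_l r1 r2 : re_equiv r1 Eps -> re_equiv (Cat r1 r2) r2.
Proof.
move=> E w /=; split; first by move=> [u [v [-> [/E -> Hv]]]].
by move=> Hw; exists [::], w; rewrite E.
Qed.

Lemma re_equiv_Cat_Eps_r r1 r2 : re_equiv r2 Eps -> re_equiv (Cat r1 r2) r1.
Proof.
move=> E w /=; split; first by move=> [u [v [-> [Hu /E ->]]]]; rewrite cats0.
by move=> Hw; exists w, [::]; rewrite E cats0.
Qed.

Definition lang_union l w := exists2 b, List.In b l & lang b w.

Lemma lang_re_sum b bs w : lang (re_sum b bs) w <-> lang_union (b :: bs) w.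
Proof.
elim: bs b => [|c cs IH] b /=.
  by split=> [Hw | [c [<- | []] Hw]]; first exists b; first left.
rewrite IH; split=> [[Hw | [c' Hc' Hw]] | [c' [<- | Hc'] Hw]].
- by exists b; first left.
- by exists c'; first right.
- by left.
- by right; exists c'.
Qed.

Lemma lang_union_cat l1 l2 w :
  lang_union (l1 ++ l2) w <-> lang_union l1 w \/ lang_union l2 w.
Proof.
split=> [[b /List.in_app_iff [] Hb Hw] | [] [b Hb Hw]].
- by left; exists b.
- by right; exists b.
- by exists b => //; apply/List.in_app_iff; left.
- by exists b => //; apply/List.in_app_iff; right.
Qed.

Lemma lang_union_map_Catr r1 r2 l :
  (forall w, lang r1 w <-> lang_union l w) ->
  forall w, lang (Cat r1 r2) w <-> lang_union [seq Cat b r2 | b <- l] w.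
Proof.
move=> E w /=; split=> [[u [v [-> [/E [b Hb Hu] Hv]]]] |].
  by exists (Cat b r2); [apply: List.in_map | exists u, v].
move=> [_ /List.in_map_iff [b [<- Hb]] [u [v [-> [Hu Hv]]]]].
by exists u, v; split=> //; split=> //; apply/E; exists b.
Qed.

Lemma lang_union_map_Catl r1 r2 l :
  (forall w, lang r2 w <-> lang_union l w) ->
  forall w, lang (Cat r1 r2) w <-> lang_union [seq Cat r1 b | b <- l] w.
Proof.
move=> E w /=; split=> [[u [v [-> [Hu /E [b Hb Hv]]]]] |].
  by exists (Cat r1 b); [apply: List.in_map | exists u, v].
move=> [_ /List.in_map_iff [b [<- Hb]] [u [v [-> [Hu Hv]]]]].
by exists u, v; split=> //; split=> //; apply/E; exists b.
Qed.

Definition lp_decomposition r l := [/\ size l <= rpn r,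
  List.Forall (@log_product A) l & forall w, lang r w <-> lang_union l w].

Lemma lp_decomposition_Letter a : lp_decomposition (Letter a) [:: Letter a].
Proof.
split=> //; first by constructor; constructor.
by move=> w /=; split=> [Hw | [b [<- | []] //]]; exists (Letter a); first left.
Qed.

Lemma lp_decomposition_Plus r1 r2 l1 l2 :
  lp_decomposition r1 l1 -> lp_decomposition r2 l2 ->
  lp_decomposition (Plus r1 r2) (l1 ++ l2).
Proof.
move=> [s1 f1 e1] [s2 f2 e2]; split.
- by rewrite size_cat /=; lia.
- exact/List.Forall_app.
- by move=> w; rewrite lang_union_cat /= e1 e2.
Qed.

Lemma lp_decomposition_equiv r r' l :
  re_equiv r r' -> rpn r' <= rpn r -> lp_decomposition r' l -> lp_decomposition r l.
Proof.
move=> E le_rpn [s f e]; split=> //; first exact: leq_trans le_rpn.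
by move=> w; rewrite E.
Qed.

Lemma has_deg_lang_union l r d :
  (forall w, lang r w <-> lang_union l w) -> has_deg r d ->
  forall b, List.In b l -> has_deg b d.
Proof. by move=> E Hd b Hb w Hw; apply/Hd/E; exists b. Qed.

Lemma lp_decomposition_Catr r1 r2 l d1 d2 :
  has_deg r1 d1 -> has_deg r2 d2 -> d2 <= d1 -> lp_decomposition r1 l ->
  lp_decomposition (Cat r1 r2) [seq Cat b r2 | b <- l].
Proof.
move=> D1 D2 le_d [s f e]; split.
- by rewrite size_map /=; lia.
- apply/List.Forall_forall => _ /List.in_map_iff [b [<- Hb]].
  apply: (LP_catl _ _ D2 le_d); first exact: (proj1 (List.Forall_forall _ _) f).
  exact: has_deg_lang_union e D1 b Hb.
- exact: lang_union_map_Catr.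
Qed.

Lemma lp_decomposition_Catl r1 r2 l d1 d2 :
  has_deg r1 d1 -> has_deg r2 d2 -> d1 <= d2 -> lp_decomposition r2 l ->
  lp_decomposition (Cat r1 r2) [seq Cat r1 b | b <- l].
Proof.
move=> D1 D2 le_d [s f e]; split.
- by rewrite size_map /=; lia.
- apply/List.Forall_forall => _ /List.in_map_iff [b [<- Hb]].
  apply: (LP_catr _ _ D1 le_d); first exact: (proj1 (List.Forall_forall _ _) f).
  exact: has_deg_lang_union e D2 b Hb.
- exact: lang_union_map_Catl.
Qed.

Lemma homogeneous_lp_decomposition r d :
  has_deg r d -> 0 < d -> exists l, lp_decomposition r l.
Proof.
elim: r d => [|a|r1 IH1 r2 IH2|r1 IH1 r2 IH2] d Hd d_gt0.
- by move: (Hd [::] erefl) d_gt0 => <-.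
- by exists [:: Letter a]; apply: lp_decomposition_Letter.
- have [D1 D2] := has_deg_Plus Hd.
  have [l1 dec1] := IH1 d D1 d_gt0; have [l2 dec2] := IH2 d D2 d_gt0.
  by exists (l1 ++ l2); apply: lp_decomposition_Plus.
have [d1 [d2 [D1 D2 dE]]] := has_deg_Cat Hd; rewrite -{d Hd}dE in d_gt0.
have [d1_0 | d1_gt0] := posnP d1.
  rewrite d1_0 in D1 d_gt0; have [l dec2] := IH2 d2 D2 d_gt0; exists l.
  apply: lp_decomposition_equiv dec2; last by rewrite /=; lia.
  exact/re_equiv_Cat_Eps_l/has_deg0_equiv_Eps.
have [d2_0 | d2_gt0] := posnP d2.
  rewrite d2_0 addn0 in D2 d_gt0; have [l dec1] := IH1 d1 D1 d_gt0; exists l.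
  apply: lp_decomposition_equiv dec1; last by rewrite /=; lia.
  exact/re_equiv_Cat_Eps_r/has_deg0_equiv_Eps.
have [le_d | /ltnW le_d] := leqP d2 d1.
  have [l dec1] := IH1 d1 D1 d1_gt0.
  by exists [seq Cat b r2 | b <- l]; apply: lp_decomposition_Catr D1 D2 le_d dec1.
have [l dec2] := IH2 d2 D2 d2_gt0.
by exists [seq Cat r1 b | b <- l]; apply: lp_decomposition_Catl D1 D2 le_d dec2.
Qed.

End LogProductDecomposition.

Theorem lemma6p2 (A : Type) (R : re A) :
  homogeneous R -> ~ re_equiv R Eps ->
  exists (b : re A) (bs : seq (re A)),
    (size bs).+1 <= rpn R /\
    log_product b /\ List.Forall (@log_product A) bs /\
    re_equiv R (re_sum b bs).
Proof.
move=> [d Hd] not_Eps.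
have [d_0 | d_gt0] := posnP d.
  by rewrite d_0 in Hd; case: not_Eps; apply: has_deg0_equiv_Eps.
have [[|b bs] [s f e]] := homogeneous_lp_decomposition Hd d_gt0.
  by have [w /e [b []]] := lang_inhabited R.
exists b, bs; split=> //; split; first exact: List.Forall_inv f.
split; first exact: List.Forall_inv_tail f.
by move=> w; rewrite e lang_re_sum.
Qed.
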